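(* Let $G$ be a finite simple graph. If $G$ is not a cover graph, then the direct product $G \times G$ is not a cover graph.
   Context: A graph is a cover graph if it is the underlying (undirected) graph of the Hasse diagram of some finite partially ordered set. The direct product $G \times H$ has vertex set $V(G)\times V(H)$, with $(g_i,h_s)$ adjacent to $(g_j,h_t)$ if and only if $g_ig_j \in E(G)$ and $h_sh_t \in E(H)$. *)

From mathcomp Require Import all_boot.
Set Implicit Arguments. Unset Strict Implicit. Unset Printing Implicit Defensive.

Definition simple_graph (T : finType) (e : rel T) : Prop :=
  symmetric e /\ irreflexive e.

Definition strict_order (T : finType) (lt : rel T) : Prop :=
  irreflexive lt /\ transitive lt.

Definition covers (T : finType) (lt : rel T) (x y : T) : bool :=
  lt x y && [forall z, ~~ (lt x z && lt z y)].

Definition cover_graph (T : finType) (e : rel T) : Prop :=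
  exists lt : rel T, strict_order lt /\
    forall x y, e x y = covers lt x y || covers lt y x.

Definition direct_prod (T U : finType) (e : rel T) (f : rel U) : rel (T * U) :=
  fun p q => e p.1 q.1 && f p.2 q.2.

From mathcomp Require Import all_boot.
Set Implicit Arguments. Unset Strict Implicit.

(* The diagonal {(x, x)} of G x G induces a copy of G, and cover graphs are
   closed under taking induced subgraphs: orient each edge of the subgraph as
   the Hasse diagram of the big order does and take the transitive closure of
   these arcs.  Every arc is still a cover of the closure, because anything
   strictly between its ends in the closure would lie strictly between them
   in the big order, and conversely a cover of the closure cannot be a chain
   of two or more arcs. *)

Section TransitiveClosure.

Variables (U : finType) (r : rel U).

Definition tclosure : rel U := fun x y => [exists z, r x z && connect r z y].

Lemma tclosure1 x y : r x y -> tclosure x y.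
Proof. by move=> rxy; apply/existsP; exists y; rewrite rxy connect0. Qed.

Lemma tclosure_trans : transitive tclosure.
Proof.
move=> y x w /existsP[z /andP[rxz czy]] /existsP[z' /andP[ryz' cz'w]].
apply/existsP; exists z; rewrite rxz /=.
exact: connect_trans czy (connect_trans (connect1 ryz') cz'w).
Qed.

Lemma tclosure_split x y :
  tclosure x y -> r x y \/ exists2 z, tclosure x z & tclosure z y.
Proof.
case/existsP=> z /andP[rxz /connectP[[|z' p] /= pth ->]]; first by left.
case/andP: pth => rzz' pth; right; exists z; first exact: tclosure1.
by apply/existsP; exists z'; rewrite rzz'; apply/connectP; exists p.
Qed.

Lemma tclosure_homo (T : finType) (lt : rel T) (f : U -> T) :
  transitive lt -> {homo f : x y / r x y >-> lt x y} ->
  {homo f : x y / tclosure x y >-> lt x y}.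
Proof.
move=> lt_trans r_lt x y /existsP[z /andP[rxz /connectP[p]]].
elim: p x z rxz => [|z' p IHp] x z rxz /=; first by move=> _ ->; exact: r_lt.
by case/andP=> rzz' pth yE; apply: lt_trans (r_lt _ _ rxz) (IHp _ _ rzz' pth yE).
Qed.

End TransitiveClosure.

Lemma cover_graph_induced (T U : finType) (e : rel T) (e' : rel U) (f : U -> T) :
  (forall x y, e' x y = e (f x) (f y)) -> cover_graph e -> cover_graph e'.
Proof.
move=> e'E [lt [[lt_irr lt_trans] eE]].
pose arc : rel U := fun x y => covers lt (f x) (f y).
have arc_lt : {homo f : x y / arc x y >-> lt x y} by move=> x y /andP[].
have clo_lt := tclosure_homo lt_trans arc_lt.
have covers_clo x y : covers (tclosure arc) x y = arc x y.
  apply/idP/idP => [/andP[/tclosure_split[//|[z xz zy]] /forallP/(_ z)]|arc_xy].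
    by rewrite xz zy.
  rewrite /covers tclosure1 //=; apply/forallP=> z; apply/negP=> /andP[xz zy].
  by case/andP: arc_xy => _ /forallP/(_ (f z)); rewrite !clo_lt.
exists (tclosure arc); split.
  split; last exact: tclosure_trans.
  by move=> x; apply/negbTE/negP=> /clo_lt; rewrite lt_irr.
by move=> x y; rewrite e'E eE !covers_clo.
Qed.

Theorem corollary5 (T : finType) (e : rel T) :
  simple_graph e -> ~ cover_graph e -> ~ cover_graph (direct_prod e e).
Proof.
move=> _ not_cover cover_prod; apply: not_cover.
apply: (cover_graph_induced (f := fun x => (x, x))) cover_prod => x y.
by rewrite /direct_prod andbb.
Qed.
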